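(* The set $\mathcal{A}_N^C$ is star-shaped with respect to the flat matrix $T_*=\frac1N\sum_{k=0}^{N-1}X^k$: for every $T\in\mathcal{A}_N^C$ and every $m\in(0,1]$, $mT+(1-m)T_*\in\mathcal{A}_N^C$.
   Context: $X$ is the $N\times N$ cyclic shift $X|j\rangle=|j\oplus1\rangle$ (addition mod $N$), $\mathcal{K}_k=X^k-\mathbb{I}_N$, and $\mathcal{A}_N^C$ is the set of matrices $\exp(\sum_{k=1}^{N-1}t_k\mathcal{K}_k)$ with all $t_k\ge0$. *)

From HB Require Import structures.
From mathcomp Require Import all_boot all_order all_algebra.
From mathcomp Require Import all_classical all_reals all_analysis.
Unset Printing Implicit Defensive.
Import Order.TTheory GRing.Theory Num.Theory.
Import numFieldNormedType.Exports.
Local Open Scope ring_scope.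

Definition shiftX (R : pzRingType) (N : nat) : 'M[R]_N :=
  \matrix_(i < N, j < N) ((nat_of_ord i == (nat_of_ord j).+1 %% N)%N)%:R.

Definition expm (R : realType) (N : nat) (A : 'M[R]_N) : 'M[R]_N :=
  \matrix_(i < N, j < N)
    limn (fun n : nat => ((\sum_(k < n) ((k`!%:R)^-1 *: A ^+ k)) i j : R)).

Definition Kgen (R : realType) (N k : nat) : 'M[R]_N := (shiftX R N) ^+ k - 1%:M.

Definition circAC (R : realType) (N : nat) : set 'M[R]_N :=
  [set T | exists t : nat -> R,
      (forall k : nat, (1 <= k < N)%N -> 0 <= t k) /\
      T = expm R N (\sum_(1 <= k < N) t k *: Kgen R N k)].

Definition Tflat (R : realType) (N : nat) : 'M[R]_N :=
  (N%:R)^-1 *: \sum_(k < N) (shiftX R N) ^+ k.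

(* Write L = sum_k t_k K_k and P = T_*.  Since X P = P X = P, the flat matrix
   is idempotent and K_k P = P K_k = 0, hence L P = P L = 0 and exp(L) P = P.
   Moreover sum_{k=1}^{N-1} K_k = N (P - I), so raising every t_k by a / N
   adds a (P - I) to the exponent.  This term commutes with L, and on the
   idempotent P the exponential is explicit: exp(a (P - I)) =
   e^-a (I + (e^a - 1) P).  Hence the new matrix is
   e^-a exp(L) + (1 - e^-a) P, which is m T + (1 - m) T_* for a = -ln m >= 0.
   The only analytic input is exp(A + B) = exp(A) exp(B) for commuting A, B,
   which follows from the Cauchy product of absolutely convergent series. *)

From HB Require Import structures.
From mathcomp Require Import all_boot all_order all_algebra.
From mathcomp Require Import all_classical all_reals all_analysis.
From mathcomp Require Import zify ring.
Import Order.TTheory GRing.Theory Num.Theory.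
Import numFieldNormedType.Exports.
Local Open Scope classical_set_scope.
Local Open Scope ring_scope.

Lemma sum_antidiagonal (V : nmodType) (F : nat -> nat -> V) m :
  \sum_(i < m.+1) \sum_(j < m.+1) (if (i + j == m)%N then F i j else 0) =
  \sum_(j < m.+1) F (m - j)%N j.
Proof.
rewrite exchange_big /=; apply: eq_bigr => j _.
have le_jm : (j <= m)%N by rewrite -ltnS.
rewrite (eq_bigr (fun i : 'I_m.+1 =>
    if i == (m - j)%N :> nat then F (m - j)%N j else 0)); last first.
  move=> i _; have -> : (i + j == m)%N = (i == (m - j)%N :> nat) by lia.
  by case: eqP => // ->.
rewrite -big_mkcond /= (big_ord1_eq _ (fun=> F (m - j)%N j)) /=.
by rewrite ifT //; lia.
Qed.

Lemma sum_antidiagonals (V : nmodType) (F : nat -> nat -> V) m :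
  \sum_(k < m) \sum_(i < k.+1) F (k - i)%N i =
  \sum_(i < m) \sum_(j < m) (if (i + j < m)%N then F i j else 0).
Proof.
elim: m => [|m IHm]; first by rewrite !big_ord0.
rewrite big_ord_recr /= IHm -sum_antidiagonal.
rewrite [RHS](eq_bigr (fun i : 'I_m.+1 =>
    \sum_(j < m.+1) (if (i + j < m)%N then F i j else 0) +
    \sum_(j < m.+1) (if (i + j == m)%N then F i j else 0))); last first.
  move=> i _; rewrite -big_split /=; apply: eq_bigr => j _.
  rewrite ltnS leq_eqVlt orbC.
  case: ltnP => [lt_ijm|_]; last by rewrite add0r.
  by rewrite (_ : (i + j == m)%N = false) ?addr0 //; lia.
rewrite big_split /=; congr (_ + _).
rewrite big_ord_recr /= [X in _ + X]big1 ?addr0; last first.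
  by move=> j _; rewrite ifF // ltnNge leq_addr.
apply: eq_bigr => i _; rewrite big_ord_recr /= ifF ?addr0 //.
by rewrite ltnNge leq_addl.
Qed.

Section CauchyProduct.
Variable R : realType.
Implicit Types a b : R ^nat.

Lemma cvg_sum (I : Type) (r : seq I) (u : I -> R ^nat) (l : I -> R) :
  (forall i, u i m @[m --> \oo] --> l i) ->
  \sum_(i <- r) u i m @[m --> \oo] --> \sum_(i <- r) l i.
Proof. by move=> u_cvg; apply: cvg_big => //; exact: add_continuous. Qed.

Definition cauchy_psum a b m : R :=
  \sum_(i < m) \sum_(j < m) (if (i + j < m)%N then a i * b j else 0).

Lemma seriesM_widen a b {n m : nat} : (n <= m)%N ->
  series a n * series b n =
  \sum_(i < m) \sum_(j < m) (if (i < n)%N && (j < n)%N then a i * b j else 0).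
Proof.
move=> le_nm; rewrite !seriesEord /= !(big_ord_widen _ _ le_nm).
rewrite big_mkcond mulr_suml; apply: eq_bigr => i _.
rewrite big_mkcond mulr_sumr.
apply: eq_bigr => j _.
by case: (i < n)%N; case: (j < n)%N; rewrite ?mulr0 ?mul0r.
Qed.

Lemma cauchy_psum_half_dist a b m :
  `|cauchy_psum a b m - series a m./2 * series b m./2| <=
  [normed series a] m * [normed series b] m -
  [normed series a] m./2 * [normed series b] m./2.
Proof.
(* [0, m/2)^2 lies inside the triangle i + j < m, which lies inside [0, m)^2. *)
have le_half : (m./2 <= m)%N by rewrite -divn2 leq_div.
rewrite (seriesM_widen _ _ le_half) (seriesM_widen _ _ le_half).
rewrite (seriesM_widen _ _ (leqnn m)) /cauchy_psum -!sumrB.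
apply: le_trans (ler_norm_sum _ _ _) _; apply: ler_sum => i _.
rewrite -!sumrB; apply: le_trans (ler_norm_sum _ _ _) _; apply: ler_sum => j _.
rewrite !ltn_ord /=.
case: (ltnP i m./2) => i_half; case: (ltnP j m./2) => j_half /=.
- have -> : (i + j < m)%N by lia.
  by rewrite !subrr normr0.
all: rewrite !subr0; case: (i + j < m)%N; rewrite ?normrM ?normr0 ?mulr_ge0 //.
Qed.

Lemma cvg_cauchy_psum a b :
  cvgn [normed series a] -> cvgn [normed series b] ->
  cauchy_psum a b m @[m --> \oo] --> limn (series a) * limn (series b).
Proof.
move=> /[dup] /normed_cvg a_cvg na_cvg /[dup] /normed_cvg b_cvg nb_cvg.
have half_cvg : (m./2)%N @[m --> \oo] --> \oo.
  by under eq_cvg do rewrite -divn2; exact: cvg_divnr.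
have half (u : R ^nat) : cvgn u -> u m./2 @[m --> \oo] --> limn u.
  by move=> u_cvg; exact: cvg_comp half_cvg u_cvg.
pose e m := [normed series a] m * [normed series b] m -
  [normed series a] m./2 * [normed series b] m./2.
have e_cvg0 : e m @[m --> \oo] --> 0.
  rewrite -(subrr (limn [normed series a] * limn [normed series b])).
  by apply: cvgB; apply: cvgM => //; exact: half.
have prod_half : series a m./2 * series b m./2 @[m --> \oo] -->
    limn (series a) * limn (series b) by apply: cvgM; exact: half.
have lower : series a m./2 * series b m./2 - e m @[m --> \oo] -->
    limn (series a) * limn (series b).
  by rewrite -[X in _ --> X]subr0; apply: cvgB.
have upper : series a m./2 * series b m./2 + e m @[m --> \oo] -->
    limn (series a) * limn (series b).
  by rewrite -[X in _ --> X]addr0; apply: cvgD.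
apply: (squeeze_cvgr _ lower upper); near=> m.
by rewrite -ler_distl; exact: cauchy_psum_half_dist.
Unshelve. all: by end_near.
Qed.

End CauchyProduct.
Arguments cauchy_psum {R}.

Section MatrixExponential.
Variables (R : realType) (n : nat).
Implicit Types (A B L P : 'M[R]_n) (p q : 'I_n).

Definition expm_term A p q (k : nat) : R := ((k`!%:R)^-1 *: A ^+ k) p q.

Lemma expmE A p q : expm R n A p q = limn (series (expm_term A p q)).
Proof.
by rewrite mxE seriesEord; congr (limn _); apply/funext => m; rewrite summxE.
Qed.

Definition mx_l1norm A : R := \sum_p \sum_q `|A p q|.

Lemma mx_l1norm_ge0 A : 0 <= mx_l1norm A.
Proof. by apply: sumr_ge0 => p _; apply: sumr_ge0. Qed.

Lemma row_norm_le_l1norm A p : \sum_q `|A p q| <= mx_l1norm A.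
Proof.
rewrite /mx_l1norm [leRHS](bigD1 p) //= lerDl.
by apply: sumr_ge0 => i _; apply: sumr_ge0.
Qed.

Lemma norm_exprn_entry_le A k p q : `|(A ^+ k) p q| <= mx_l1norm A ^+ k.
Proof.
elim: k p q => [|k IHk] p q.
  by rewrite expr0 -idmxE mxE; case: (p == q); rewrite ?normr1 ?normr0.
rewrite exprS -mulmxE mxE; apply: le_trans (ler_norm_sum _ _ _) _.
apply: (@le_trans _ _ (\sum_r `|A p r| * mx_l1norm A ^+ k)).
  by apply: ler_sum => r _; rewrite normrM ler_wpM2l.
rewrite -mulr_suml exprS ler_wpM2r ?exprn_ge0 ?mx_l1norm_ge0 //.
exact: row_norm_le_l1norm.
Qed.

Lemma cvg_normed_expm_term A p q : cvgn [normed series (expm_term A p q)].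
Proof.
apply: (series_le_cvg _ _ _ (is_cvg_series_exp_coeff (mx_l1norm A))) => k.
- exact: normr_ge0.
- by rewrite exp_coeffE mulr_ge0 ?invr_ge0 ?exprn_ge0 ?mx_l1norm_ge0.
- rewrite exp_coeffE /expm_term /= mxE normrM ger0_norm ?invr_ge0 //.
  by rewrite ler_wpM2l ?invr_ge0 ?norm_exprn_entry_le.
Qed.

Lemma cvg_expm_term A p q : cvgn (series (expm_term A p q)).
Proof. exact/normed_cvg/cvg_normed_expm_term. Qed.

Let fact_neq0 k : (k`!%:R : R) != 0.
Proof. by rewrite pnatr_eq0 -lt0n fact_gt0. Qed.

Lemma exp_binomial_termE A B k (i : 'I_k.+1) :
  (k`!%:R : R)^-1 *: (A ^+ (k - i) * B ^+ i *+ 'C(k, i)) =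
  (((k - i)`!%:R)^-1 *: A ^+ (k - i)) * ((i`!%:R)^-1 *: B ^+ i).
Proof.
rewrite -[_ *+ 'C(k, i)]scaler_nat scalerA -!mulmxE.
rewrite -scalemxAl -scalemxAr scalerA.
congr (_ *: _); have le_ik : (i <= k)%N by rewrite -ltnS.
rewrite -(bin_fact le_ik) !natrM !invfM; field.
by rewrite !fact_neq0 pnatr_eq0 -lt0n bin_gt0 le_ik.
Qed.

Lemma exp_psumD A B m : A * B = B * A ->
  \sum_(k < m) ((k`!%:R)^-1 *: (A + B) ^+ k) =
  \sum_(i < m) \sum_(j < m) (if (i + j < m)%N then
     ((i`!%:R)^-1 *: A ^+ i) * ((j`!%:R)^-1 *: B ^+ j) else 0).
Proof.
move=> AB_comm; rewrite -(sum_antidiagonals _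
  (fun i j => ((i`!%:R)^-1 *: A ^+ i) * ((j`!%:R)^-1 *: B ^+ j))).
apply: eq_bigr => k _; rewrite exprDn_comm // scaler_sumr.
by apply: eq_bigr => i _; exact: exp_binomial_termE.
Qed.

Lemma expmD A B :
  A *m B = B *m A -> expm R n (A + B) = expm R n A *m expm R n B.
Proof.
rewrite !mulmxE => AB_comm; apply/matrixP => p q.
rewrite expmE mxE; under eq_bigr do rewrite !expmE.
apply: cvg_lim => //; rewrite [X in X @ _](_ : _ =
    fun m => \sum_r cauchy_psum (expm_term A p r) (expm_term B r q) m).
  apply: cvg_sum => r.
  exact/cvg_cauchy_psum/cvg_normed_expm_term/cvg_normed_expm_term.
apply/funext => m; rewrite seriesEord /= /expm_term -summxE exp_psumD // summxE.
rewrite /cauchy_psum exchange_big /=; apply: eq_bigr => i _.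
rewrite summxE exchange_big /=; apply: eq_bigr => j _.
by case: ifP => _; [rewrite -mulmxE mxE | rewrite mxE big1].
Qed.

Lemma expmZ_idem P (c : R) :
  P *m P = P -> expm R n (c *: P) = 1%:M + (expR c - 1) *: P.
Proof.
move=> P_idem; have powZP k : (c *: P) ^+ k.+1 = c ^+ k.+1 *: P.
  elim: k => [|k IHk]; first by rewrite !expr1.
  by rewrite exprS IHk -mulmxE -scalemxAl -scalemxAr P_idem scalerA -exprS.
have psumE p q m : series (expm_term (c *: P) p q) m.+1 =
    1%:M p q + (series (exp_coeff c) m.+1 - 1) * P p q.
  elim: m => [|m IHm].
    by rewrite !seriesEord /= !big_ord1 /expm_term exp_coeffE /= !expr0 fact0
      invr1 scale1r mulr1 subrr mul0r addr0.
  rewrite seriesSr IHm [in RHS]seriesSr /expm_term /= powZP exp_coeffE !mxE /=.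
  by rewrite [_ + _ - 1]addrAC [in RHS]mulrDl [in RHS]addrA mulrA.
have expR_cvg : series (exp_coeff c) k @[k --> \oo] --> expR c.
  by rewrite expRE /pseries -exp_coeffE; exact: is_cvg_series_exp_coeff.
apply/matrixP => p q; rewrite expmE !mxE; apply: cvg_lim => //.
have psumS_cvg : series (expm_term (c *: P) p q) k.+1 @[k --> \oo] -->
    (p == q)%:R + (expR c - 1) * P p q.
  under eq_cvg do rewrite psumE mxE.
  apply: cvgD; first exact: cvg_cst.
  apply: cvgM; last exact: cvg_cst.
  by apply: cvgB; [rewrite cvg_shiftS | exact: cvg_cst].
by rewrite -cvg_shiftS.
Qed.

Lemma expm_mulmx_null L P : L *m P = 0 -> expm R n L *m P = P.
Proof.
move=> LP0; have psumP k : (\sum_(i < k.+1) ((i`!%:R)^-1 *: L ^+ i)) *m P = P.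
  rewrite mulmx_suml big_ord_recl big1 => [|i _].
    by rewrite expr0 fact0 invr1 scale1r mul1mx addr0.
  by rewrite exprSr -scalemxAl -mulmxE -mulmxA LP0 mulmx0 scaler0.
apply/matrixP => p q; rewrite mxE; under eq_bigr do rewrite expmE.
have entry_cvg : \sum_r series (expm_term L p r) k * P r q @[k --> \oo] -->
    \sum_r limn (series (expm_term L p r)) * P r q.
  by apply: cvg_sum => r; apply: cvgM; [exact: cvg_expm_term | exact: cvg_cst].
have entryS_cvg :
    \sum_r series (expm_term L p r) k.+1 * P r q @[k --> \oo] --> P p q.
  apply: cvg_near_cst; apply: nearW => k.
  have := congr1 (fun M : 'M[R]_n => M p q) (psumP k); rewrite mxE => <-.
  by apply: eq_bigr => r _; rewrite seriesEord /= summxE.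
rewrite -(cvg_lim _ entry_cvg) //; apply: cvg_lim => //.
by rewrite -cvg_shiftS.
Qed.

Lemma expm_shift_idem L P a : P *m P = P -> L *m P = 0 -> P *m L = 0 ->
  expm R n (L + a *: (P - 1%:M)) =
  expR (- a) *: expm R n L + (1 - expR (- a)) *: P.
Proof.
move=> P_idem LP0 PL0; rewrite scalerBr -scaleNr.
have P_comm : (a *: P) *m (- a *: 1%:M) = (- a *: 1%:M) *m (a *: P).
  by rewrite -!scalemxAl -!scalemxAr mulmx1 mul1mx !scalerA mulrC.
have L_comm : L *m (a *: P + - a *: 1%:M) = (a *: P + - a *: 1%:M) *m L.
  by rewrite mulmxDr mulmxDl -!scalemxAr -!scalemxAl LP0 PL0 mulmx1 mul1mx.
rewrite expmD // expmD // expmZ_idem // expmZ_idem ?mul1mx //.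
have -> : 1%:M + (expR (- a) - 1) *: 1%:M = expR (- a) *: (1%:M : 'M[R]_n).
  by rewrite scalerBl scale1r addrC subrK.
rewrite -scalemxAr mulmx1 -scalemxAr mulmxDr mulmx1 -scalemxAr.
rewrite expm_mulmx_null // scalerDr scalerA; congr (_ + _ *: _).
by rewrite expRN mulrBr mulVf ?gt_eqF ?expR_gt0 ?mulr1.
Qed.

End MatrixExponential.
Arguments expm_term {R n}.

Section FlatMatrix.
Variables (R : realType) (N : nat).
Local Notation X := (shiftX R N).
Local Notation S := (\sum_(k < N) X ^+ k).
Local Notation Tf := (Tflat R N).

Lemma shiftX_exprE k (i j : 'I_N) :
  (X ^+ k) i j = (i == (j + k) %% N :> nat)%N%:R.
Proof.
have N_gt0 : (0 < N)%N by apply: leq_ltn_trans (ltn_ord i).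
elim: k i j => [|k IHk] i j; first by rewrite expr0 -idmxE mxE addn0 modn_small.
rewrite exprSr -mulmxE mxE (bigD1 (Ordinal (ltn_pmod j.+1 N_gt0))) //= big1.
  by rewrite IHk mxE /= eqxx mulr1 addr0 modnDml addSnnS.
move=> r r_neq; rewrite mxE; case: eqP => [r_eq | _]; last by rewrite mulr0.
by case/eqP: r_neq; apply: val_inj.
Qed.

Lemma shiftX_exprN : X ^+ N = 1.
Proof.
by apply/matrixP => i j; rewrite shiftX_exprE -idmxE mxE modnDr modn_small.
Qed.

Lemma shiftX_mul_sum : X * S = S.
Proof.
rewrite mulr_sumr; under eq_bigr do rewrite -exprS.
case: N shiftX_exprN => [|N'] XN; first by rewrite !big_ord0.
by rewrite big_ord_recr /= XN [RHS]big_ord_recl /= expr0 addrC.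
Qed.

Lemma sum_mul_shiftX : S * X = S.
Proof.
have X_comm : GRing.comm X S by apply: commr_sum => i _; exact: commrX.
by rewrite -X_comm shiftX_mul_sum.
Qed.

Lemma shiftX_expr_mul_sum k : X ^+ k * S = S.
Proof.
by elim: k => [|k IHk]; rewrite ?mul1r // exprSr -mulrA shiftX_mul_sum.
Qed.

Lemma sum_mul_shiftX_expr k : S * X ^+ k = S.
Proof.
by elim: k => [|k IHk]; rewrite ?mulr1 // exprS mulrA sum_mul_shiftX.
Qed.

Lemma Tflat_idem : (0 < N)%N -> Tf *m Tf = Tf.
Proof.
move=> N_gt0; rewrite /Tflat -scalemxAl -scalemxAr scalerA mulmxE mulr_suml.
under eq_bigr do rewrite shiftX_expr_mul_sum.
rewrite sumr_const card_ord -(scaler_nat N S) scalerA -mulrA mulVf ?mulr1 //.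
by rewrite pnatr_eq0 -lt0n.
Qed.

Lemma shiftX_expr_Tflat k : X ^+ k *m Tf = Tf.
Proof. by rewrite /Tflat -scalemxAr mulmxE shiftX_expr_mul_sum. Qed.

Lemma Tflat_shiftX_expr k : Tf *m X ^+ k = Tf.
Proof. by rewrite /Tflat -scalemxAl mulmxE sum_mul_shiftX_expr. Qed.

Lemma sum_Kgen :
  (0 < N)%N -> \sum_(1 <= k < N) Kgen R N k = N%:R *: (Tf - 1%:M).
Proof.
move=> N_gt0.
have <- : \sum_(0 <= k < N) Kgen R N k = \sum_(1 <= k < N) Kgen R N k.
  by rewrite big_ltn // /Kgen expr0 -idmxE subrr add0r.
rewrite big_mkord /Kgen sumrB sumr_const card_ord.
rewrite scalerBr /Tflat scalerA mulfV ?scale1r ?scaler_nat //.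
by rewrite pnatr_eq0 -lt0n.
Qed.

Lemma sum_Kgen_mulmx_Tflat (t : nat -> R) :
  (\sum_(1 <= k < N) t k *: Kgen R N k) *m Tf = 0.
Proof.
rewrite mulmx_suml big1 // => k _.
by rewrite -scalemxAl mulmxBl shiftX_expr_Tflat mul1mx subrr scaler0.
Qed.

Lemma Tflat_mulmx_sum_Kgen (t : nat -> R) :
  Tf *m (\sum_(1 <= k < N) t k *: Kgen R N k) = 0.
Proof.
rewrite mulmx_sumr big1 // => k _.
by rewrite -scalemxAr mulmxBr Tflat_shiftX_expr mulmx1 subrr scaler0.
Qed.

End FlatMatrix.

Theorem corollary3 (R : realType) (N : nat) (T : 'M[R]_N) (m : R) :
  circAC R N T -> 0 < m -> m <= 1 ->
  circAC R N (m *: T + (1 - m) *: Tflat R N).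
Proof.
move=> [t [t_ge0 ->]] m_gt0 m_le1.
have [N0 | N_gt0] := posnP N.
  by subst N; exists t; split => //; apply/matrixP => -[].
pose a := - ln m; have a_ge0 : 0 <= a by rewrite oppr_ge0 ln_le0.
exists (fun k => t k + a / N%:R); split.
  by move=> k /t_ge0 tk_ge0; rewrite addr_ge0 // divr_ge0.
set L := \sum_(1 <= k < N) t k *: Kgen R N k.
have -> : \sum_(1 <= k < N) (t k + a / N%:R) *: Kgen R N k =
    L + a *: (Tflat R N - 1%:M).
  under eq_bigr do rewrite scalerDl.
  rewrite big_split /= -scaler_sumr sum_Kgen // scalerA divfK //.
  by rewrite pnatr_eq0 -lt0n.
rewrite expm_shift_idem ?Tflat_idem ?sum_Kgen_mulmx_Tflat
  ?Tflat_mulmx_sum_Kgen //.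
by rewrite /a opprK lnK ?posrE.
Qed.
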